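(* Let $d,n\in\mathbb{N}$ be such that $h_c(d,n)$ is finite. For every $\epsilon\in(0,1]$ there exists $\gamma>0$ depending only on $\epsilon$, $d$ and $n$ such that the following holds. Let $B$ be an axis-parallel box in $\mathbb{R}^d$ and $S$ a set of $m$ points in $\mathbb{R}^d$ with $|S|\ge h_c(d,n)$. If at least $\epsilon m$ points of $S$ cannot be covered by any $n$ translated copies of $B$ (i.e., for any $n$ translates of $B$, at least $\epsilon m$ points of $S$ lie outside their union), then at least a $\gamma$ fraction of all $h_c(d,n)$-element subsets of $S$ cannot be covered by any $n$ translated copies of $B$.
   Context: An axis-parallel box in $\mathbb{R}^d$ is a set $[\alpha_1,\beta_1]\times\dots\times[\alpha_d,\beta_d]$. A family is $n$-pierceable if some set of at most $n$ points meets every member. Given families $\mathcal{F}_1,\dots,\mathcal{F}_m$, a colorful $t$-tuple is $(C_1,\dots,C_t)$ with $C_j\in\mathcal{F}_{i_j}$ for pairwise distinct $i_j$. $h_c(d,n)$ denotes the smallest positive integer $h$ such that whenever $\mathcal{F}_1,\dots,\mathcal{F}_h$ are collections of axis-parallel boxes in $\mathbb{R}^d$ with every colorful $h$-tuple $n$-pierceable, some $\mathcal{F}_i$ is $n$-pierceable (e.g. $h_c(1,n)=n+1$, $h_c(d,2)=3d$). *)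

From HB Require Import structures.
From mathcomp Require Import all_boot all_order all_algebra.
From mathcomp Require Import reals.
Set Implicit Arguments. Unset Strict Implicit. Unset Printing Implicit Defensive.
Import Order.TTheory GRing.Theory Num.Theory.
Local Open Scope ring_scope.

Section Defs.
Variables (R : realType) (d : nat).

Definition point := 'I_d -> R.

Record box := Box { lo : point; hi : point; lo_le_hi : forall i, lo i <= hi i }.

Definition in_box (C : box) (x : point) : Prop :=
  forall i, lo C i <= x i /\ x i <= hi C i.

Definition family := box -> Prop.

Definition pierceable (n : nat) (F : family) : Prop :=
  exists P : 'I_n -> point, forall C, F C -> exists j, in_box C (P j).

Definition hc_prop (n h : nat) : Prop :=
  forall F : 'I_h -> family,
    (forall c : 'I_h -> box, (forall i, F i (c i)) ->
       pierceable n (fun C => exists i, C = c i)) ->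
    exists i, pierceable n (F i).

Definition is_hc (n h : nat) : Prop :=
  (0 < h)%N /\ hc_prop n h /\ forall h', (0 < h')%N -> hc_prop n h' -> (h <= h')%N.

Definition covered_by_translates (B : box) (n : nat) (t : 'I_n -> point)
    (x : point) : Prop :=
  exists j, in_box B (fun i => x i - t j i).

Definition coverable (B : box) (n m : nat) (S : 'I_m -> point)
    (A : {set 'I_m}) : Prop :=
  exists t : 'I_n -> point, forall k, k \in A -> covered_by_translates B t (S k).

End Defs.

(* Call a set of indices bad if no n translates of B cover the corresponding
   points.  Badness is monotone, every set missing fewer than eps m indices is
   bad, and any h bad sets W_1..W_h have a bad transversal: apply the colorful
   property of h to the boxes S k - B, whose piercing points are exactly the
   translation vectors covering S k.  These three properties alone force at
   least (a m)^h bad h-tuples, a = eps / h^h.  Otherwise fill an h x h array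
   row by row, keeping the invariant that, for every choice of one entry in
   each filled row, fewer than (a m)^(h-i) bad tuples extend that choice.  By
   averaging, for each of the h^h choices fewer than a m values y are heavy
   (would push the count of the next row to the threshold), so the set of
   non-heavy values misses fewer than eps m indices, is bad, and a bad
   transversal of h copies of it is a valid next row.  A bad transversal of the
   full array would then be a bad tuple counted by a threshold of 1.  Finally
   each bad h-set is reached by at most h^h tuples, and C(m, h) <= m^h. *)

From HB Require Import structures.
From mathcomp Require Import all_boot all_order all_algebra.
From mathcomp Require Import boolp reals lra.
Set Implicit Arguments. Unset Strict Implicit. Unset Printing Implicit Defensive.
Import Order.TTheory GRing.Theory Num.Theory.
Local Open Scope ring_scope.

Lemma exists_superset_card (T : finType) (Y : {set T}) (k : nat) :
  (#|Y| <= k <= #|T|)%N -> exists2 X : {set T}, Y \subset X & #|X| = k.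
Proof.
move=> /andP[Yk kT].
have : (k - #|Y| <= #|~: Y|)%N by rewrite leq_subLR cardsC.
case/card_geqP=> s [s_uniq s_size sY].
exists (Y :|: [set x in s]); first exact: subsetUl.
have sYD : [disjoint Y & [set x in s]].
  by rewrite disjoint_sym disjoints_subset; apply/subsetP=> x; rewrite inE => /sY.
move/card_uniqP: s_uniq => card_s.
by rewrite cardsU disjoint_setI0 // cards0 subn0 cardsE card_s s_size subnKC.
Qed.

Lemma card_ffuns_le_card_images (T : finType) (h : nat)
    (V : {set {ffun 'I_h -> T}}) (F : {ffun 'I_h -> T} -> {set T}) :
  (forall v, v \in V -> [set v k | k : 'I_h] \subset F v /\ #|F v| = h) ->
  (#|V| <= #|F @: V| * h ^ h)%N.
Proof.
move=> FV; rewrite -sum1_card (partition_big F [in F @: V]) => [|v vV]; last exact: imset_f.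
rewrite -sum_nat_const; apply: leq_sum => _ /imsetP[w wV ->].
rewrite sum1dep_card -[h in (h ^ _)%N](FV w wV).2 -[h in (_ ^ h)%N]card_ord -card_ffun_on -cardsE.
apply/subset_leq_card/subsetP=> v; rewrite !inE => /andP[vV /eqP <-].
by apply/ffun_onP=> k; apply: (subsetP (FV v vV).1); apply: imset_f.
Qed.

Lemma bin_leq_exp (m h : nat) : ('C(m, h) <= m ^ h)%N.
Proof.
apply: (@leq_trans ('C(m, h) * h`!)); first by rewrite leq_pmulr // fact_gt0.
rewrite bin_ffact ffact_prod -[in leqRHS](card_ord h) -prod_nat_const.
by apply: leq_prod => i _; rewrite leq_subr.
Qed.

Lemma card_bigcup_le (I T : finType) (F : I -> {set T}) :
  (#|\bigcup_i F i| <= \sum_i #|F i|)%N.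
Proof.
elim/big_rec2: _ => [|i n A _ le_An]; first by rewrite cards0.
by rewrite (leq_trans (leq_card_setU _ _)) // leq_add2l.
Qed.

Lemma card_ge_mulr_le_sum (R : numDomainType) (T : finType) (f : T -> R) (K : R) :
  (forall x, 0 <= f x) -> #|[set x | K <= f x]|%:R * K <= \sum_x f x.
Proof.
move=> f_ge0; rewrite (bigID (fun x => K <= f x)) /= -[leLHS]addr0.
apply: lerD; last exact: sumr_ge0.
rewrite mulr_natl -sumr_const [leLHS](eq_bigl (fun x => K <= f x)) => [|x].
  exact: ler_sum.
by rewrite inE.
Qed.

Section Completions.
Variables (m h : nat) (P : pred {set 'I_m}).

Definition eq_prefix (i : nat) (v u : 'I_h -> 'I_m) :=
  [forall k : 'I_h, (k < i)%N ==> (v k == u k)].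

Definition P_tuples := [set v : {ffun 'I_h -> 'I_m} | P [set v k | k : 'I_h]].

Definition completions (i : nat) (u : 'I_h -> 'I_m) :=
  [set v in P_tuples | eq_prefix i v u].

Definition set_at (u : 'I_h -> 'I_m) (i : nat) (y : 'I_m) (k : 'I_h) :=
  if k == i :> nat then y else u k.

Lemma completions0 u : completions 0 u = P_tuples.
Proof.
by apply/setP=> v; rewrite inE andb_idr // => _; apply/forallP.
Qed.

Lemma eq_completions i u u' :
  (forall k : 'I_h, (k < i)%N -> u k = u' k) -> completions i u = completions i u'.
Proof.
move=> uu'; apply/setP=> v; rewrite !inE; congr (_ && _).
by apply: eq_forallb => k; case: ltnP => //= ki; rewrite uu'.
Qed.

Lemma eq_prefixS i (ih : (i < h)%N) v u y :
  eq_prefix i.+1 v (set_at u i y) = eq_prefix i v u && (v (Ordinal ih) == y).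
Proof.
apply/forallP/andP=> [vu | [/forallP vu vy] k].
  split; last by have := vu (Ordinal ih); rewrite ltnSn /set_at eqxx.
  apply/forallP=> k; apply/implyP=> ki.
  by have := vu k; rewrite ltnS (ltnW ki) /set_at (ltn_eqF ki).
rewrite ltnS leq_eqVlt /set_at; case: eqP => [ki | _ /=]; last exact: vu.
by rewrite (_ : k = Ordinal ih) //; apply: val_inj.
Qed.

Lemma sum_card_completions i (ih : (i < h)%N) u :
  (\sum_(y : 'I_m) #|completions i.+1 (set_at u i y)| = #|completions i u|)%N.
Proof.
rewrite -sum1_card (partition_big (fun v : {ffun 'I_h -> 'I_m} => v (Ordinal ih)) predT) //=.
apply: eq_bigr => y _; rewrite -sum1_card; apply: eq_bigl => v.
by rewrite !inE eq_prefixS andbA.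
Qed.

End Completions.

Section Supersaturation.
Variables (R : realFieldType) (m h : nat) (P : pred {set 'I_m}) (eps : R).
Hypothesis h_gt0 : (0 < h)%N.
Hypothesis h_le_m : (h <= m)%N.
Hypothesis eps_gt0 : 0 < eps.
Hypothesis P_small_complement : forall D : {set 'I_m}, #|~: D|%:R < eps * m%:R -> P D.
Hypothesis P_colorful : forall W : 'I_h -> {set 'I_m}, (forall i, P (W i)) ->
  exists2 c : 'I_h -> 'I_m, (forall i, c i \in W i) & P [set c i | i : 'I_h].

Local Notation completions := (@completions m h P).
Local Notation P_tuples := (@P_tuples m h P).

Definition rate := eps / (h ^ h)%:R.
Definition threshold (i : nat) := (rate * m%:R) ^+ (h - i).

Lemma m_gt0 : (0 < m)%N. Proof. exact: leq_trans h_le_m. Qed.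

Lemma rate_m_gt0 : 0 < rate * m%:R.
Proof. by rewrite !mulr_gt0 ?invr_gt0 ?ltr0n ?expn_gt0 ?h_gt0 ?m_gt0. Qed.

Lemma threshold_gt0 i : 0 < threshold i.
Proof. exact/exprn_gt0/rate_m_gt0. Qed.

Lemma thresholdS i : (i < h)%N -> threshold i = rate * m%:R * threshold i.+1.
Proof. by move=> ih; rewrite /threshold -exprS subnSK. Qed.

Lemma threshold0_ge : rate ^+ h * 'C(m, h)%:R <= threshold 0.
Proof.
rewrite /threshold subn0 [leRHS]exprMn -natrX ler_wpM2l ?ler_nat ?bin_leq_exp //.
by rewrite exprn_ge0 // divr_ge0 // ltW.
Qed.

Definition heavy i u :=
  [set y : 'I_m | threshold i.+1 <= #|completions i.+1 (set_at u i y)|%:R].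

Lemma card_heavy_lt i u : (i < h)%N ->
  #|completions i u|%:R < threshold i -> #|heavy i u|%:R < rate * m%:R.
Proof.
move=> ih u_light; rewrite -(ltr_pM2r (threshold_gt0 i.+1)) -thresholdS //.
apply: le_lt_trans u_light.
rewrite -(sum_card_completions P ih) natr_sum.
by apply: card_ge_mulr_le_sum => y; rewrite ler0n.
Qed.

Definition admissible i (C : 'I_h -> 'I_h -> 'I_m) :=
  (forall k : 'I_h, (k < i)%N -> P [set C k j | j : 'I_h]) /\
  forall s : 'I_h -> 'I_h, #|completions i (fun k => C k (s k))|%:R < threshold i.

Lemma P_not_heavy i C : (i < h)%N -> admissible i C ->
  P (~: \bigcup_(s : {ffun 'I_h -> 'I_h}) heavy i (fun k => C k (s k))).
Proof.
move=> ih [_ C_light]; apply: P_small_complement; rewrite setCK.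
apply: (@le_lt_trans _ _
  (\sum_(s : {ffun 'I_h -> 'I_h}) #|heavy i (fun k => C k (s k))|%:R)).
  by rewrite -natr_sum ler_nat card_bigcup_le.
apply: (@lt_le_trans _ _ (\sum_(s : {ffun 'I_h -> 'I_h}) rate * m%:R)).
  apply: ltr_sum => [|s _]; last exact: card_heavy_lt.
  by apply/hasP; exists [ffun k => k]; rewrite ?mem_index_enum.
rewrite sumr_const card_ffun !card_ord /rate -mulrnAl -(mulr_natr (eps / _)) divfK //.
by rewrite pnatr_eq0 -lt0n expn_gt0 h_gt0.
Qed.

Lemma admissible_step i C : (i < h)%N -> admissible i C ->
  exists C', admissible i.+1 C'.
Proof.
move=> ih admC.
have [c c_light Pc] := P_colorful (fun=> P_not_heavy ih admC).
exists (fun k : 'I_h => if k == i :> nat then c else C k); split.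
  move=> k; rewrite ltnS leq_eqVlt => /orP[/eqP-> | ki]; first by rewrite eqxx.
  by rewrite (ltn_eqF ki); exact: admC.1.
move=> s; set s' := [ffun k => s k].
have c_not_heavy : c (s (Ordinal ih)) \notin heavy i (fun k => C k (s' k)).
  have := c_light (s (Ordinal ih)); rewrite in_setC; apply: contra => c_heavy.
  by apply/bigcupP; exists s'.
rewrite (@eq_completions _ _ _ _ _ (set_at (fun k => C k (s' k)) i (c (s (Ordinal ih))))).
  by move: c_not_heavy; rewrite inE -ltNge.
move=> k _; rewrite /set_at ffunE; case: eqP => // ki.
by rewrite (_ : k = Ordinal ih) //; apply: val_inj.
Qed.

Lemma admissible_upto i : (i <= h)%N ->
  #|P_tuples|%:R < threshold 0 -> exists C, admissible i C.
Proof.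
move=> + few; elim: i => [_ | i IH ih].
  by exists (fun _ _ => Ordinal m_gt0); split=> // s; rewrite completions0.
by have [C admC] := IH (ltnW ih); exact: admissible_step admC.
Qed.

Lemma not_admissible_full C : ~ admissible h C.
Proof.
move=> [C_rows C_light].
have [c c_rows Pc] := P_colorful (fun k => C_rows k (ltn_ord k)).
have C_onto k : exists j, C k j = c k by have /imsetP[j _ ->] := c_rows k; exists j.
have [s Cs] := choice C_onto.
have c_in : [ffun k => c k] \in completions h (fun k => C k (s k)).
  rewrite !inE; apply/andP; split; first by under eq_imset do rewrite ffunE.
  by apply/forallP=> k; rewrite ffunE Cs eqxx implybT.
have := C_light s; rewrite /threshold subnn expr0 ltrn1 ltnS leqn0 cards_eq0.
by move=> /eqP c0; rewrite c0 inE in c_in.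
Qed.

Lemma card_P_tuples_ge : threshold 0 <= #|P_tuples|%:R.
Proof.
rewrite leNgt; apply/negP=> few.
by have [C] := admissible_upto (leqnn h) few; exact: not_admissible_full.
Qed.

Hypothesis P_monotone : forall A B : {set 'I_m}, A \subset B -> P A -> P B.

Lemma exists_many_P_hsets : exists2 Fam : {set {set 'I_m}},
  threshold 0 <= (#|Fam| * h ^ h)%:R & forall A, A \in Fam -> #|A| = h /\ P A.
Proof.
have hset_above (v : {ffun 'I_h -> 'I_m}) :
    exists X : {set 'I_m}, [set v k | k : 'I_h] \subset X /\ #|X| = h.
  have : (#|[set v k | k : 'I_h]| <= h <= #|'I_m|)%N.
    by rewrite card_ord h_le_m (leq_trans (leq_imset_card _ _)) ?card_ord.
  by case/exists_superset_card=> X; exists X.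
have [F FP] := choice hset_above.
exists (F @: P_tuples).
  apply: le_trans card_P_tuples_ge _; rewrite ler_nat.
  by apply: card_ffuns_le_card_images => v _; exact: FP.
move=> _ /imsetP[v Pv ->]; split; first exact: (FP v).2.
by apply: P_monotone (FP v).1 _; rewrite inE in Pv.
Qed.

End Supersaturation.

Section Translates.
Variables (R : realType) (d n m : nat) (B : box R d) (S : 'I_m -> point R d).

Definition covering_translations (x : point R d) : box R d :=
  @Box R d (fun i => x i - hi B i) (fun i => x i - lo B i)
    (fun i => lerB (lexx (x i)) (lo_le_hi B i)).

Lemma in_covering_translations x t :
  in_box (covering_translations x) t <-> in_box B (fun i => x i - t i).
Proof. by split=> + i => /(_ i) /= [? ?]; split; lra. Qed.

Definition uncoverable (A : {set 'I_m}) := ~~ `[< coverable B n S A >].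

Lemma uncoverable_superset (A A' : {set 'I_m}) :
  A \subset A' -> uncoverable A -> uncoverable A'.
Proof.
move=> /subsetP AA' /asboolPn A_unc; apply/asboolPn=> -[t t_cov].
by apply: A_unc; exists t => k /AA'; exact: t_cov.
Qed.

Lemma uncoverable_small_complement (eps : R) :
  (forall t : 'I_n -> point R d, exists A : {set 'I_m}, eps * m%:R <= #|A|%:R /\
     forall k, k \in A -> ~ covered_by_translates B t (S k)) ->
  forall D : {set 'I_m}, #|~: D|%:R < eps * m%:R -> uncoverable D.
Proof.
move=> uncovered D D_small; apply/asboolPn=> -[t t_cov].
have [A [A_large A_unc]] := uncovered t.
have A_sub : A \subset ~: D.
  by apply/subsetP=> k kA; rewrite inE; apply/negP=> kD; exact: A_unc k kA (t_cov k kD).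
by move: D_small; rewrite ltNge (le_trans A_large) // ler_nat subset_leq_card.
Qed.

Lemma uncoverable_colorful h : hc_prop R d n h ->
  forall W : 'I_h -> {set 'I_m}, (forall i, uncoverable (W i)) ->
  exists2 c : 'I_h -> 'I_m, (forall i, c i \in W i) & uncoverable [set c i | i : 'I_h].
Proof.
move=> hc W W_unc; apply: contrapT => no_transversal.
have transversal_coverable (c : 'I_h -> 'I_m) :
    (forall i, c i \in W i) -> coverable B n S [set c i | i : 'I_h].
  by move=> cW; apply: contrapT => c_unc; apply: no_transversal; exists c => //; apply/asboolPn.
pose F i : family R d := fun C => exists k, k \in W i /\ C = covering_translations (S k).
have [i [t t_pierce]] : exists i, pierceable n (F i).
  apply: hc => C FC; have [c cP] := choice FC.
  have [t t_cov] := transversal_coverable c (fun i => (cP i).1).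
  exists t => _ [i ->]; rewrite (cP i).2.
  have [j ?] : covered_by_translates B t (S (c i)) by apply: t_cov; apply: imset_f.
  by exists j; apply/in_covering_translations.
apply: (elimT (asboolPn _) (W_unc i)); exists t => k kW.
have [j ?] := t_pierce _ (ex_intro _ k (conj kW erefl)).
by exists j; apply/in_covering_translations.
Qed.

End Translates.

Theorem lemma6 (R : realType) (d n h : nat) :
  is_hc R d n h ->
  forall eps : R, 0 < eps -> eps <= 1 ->
  exists gamma : R, 0 < gamma /\
    forall (B : box R d) (m : nat) (S : 'I_m -> point R d),
      injective S -> (h <= m)%N ->
      (forall t : 'I_n -> point R d,
         exists A : {set 'I_m}, eps * m%:R <= #|A|%:R /\
           forall k, k \in A -> ~ covered_by_translates B t (S k)) ->
      exists Fam : {set {set 'I_m}},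
        gamma * 'C(m, h)%:R <= #|Fam|%:R /\
        forall A, A \in Fam -> #|A| = h /\ ~ coverable B n S A.
Proof.
move=> [h_gt0 [hc _]] eps eps_gt0 _.
have hh_gt0 : (0 : R) < (h ^ h)%:R by rewrite ltr0n expn_gt0 h_gt0.
exists (rate h eps ^+ h / (h ^ h)%:R); split.
  by rewrite divr_gt0 // exprn_gt0 // divr_gt0.
move=> B m S _ h_le_m uncovered.
have [Fam Fam_large FamP] := exists_many_P_hsets h_gt0 h_le_m eps_gt0
  (uncoverable_small_complement uncovered) (uncoverable_colorful hc)
  (@uncoverable_superset R d n m B S).
exists Fam; split; last by move=> A /FamP[? /asboolPn].
rewrite mulrAC ler_pdivrMr // -natrM.
exact: le_trans (threshold0_ge _ _ eps_gt0) Fam_large.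
Qed.
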